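(* Let $G$ be a multiplicatively written Abelian group with identity $e$, let $\phi$ be a height on $G$, fix $\alpha\in G$, and let $t\in(0,\infty]$. The following three conditions are equivalent: (i) The infimum in the definition of $\phi_t(\alpha)$ is attained, i.e. there exists $(\alpha_1,\alpha_2,\ldots)\in G^\infty$ with $\tau_G(\alpha_1,\alpha_2,\ldots)=\alpha$ and $\phi_t(\alpha)=\|(\phi(\alpha_1),\phi(\alpha_2),\ldots)\|_t$. (ii) There exists a finite set $R\subseteq G$ (containing $e$) that replaces $G$ at $t$. (iii) There exists a set $S\subseteq G$ (containing $e$) with $\phi(S)$ finite that replaces $G$ at $t$.
   Context: A height on an Abelian group $G$ is a map $\phi:G\to[0,\infty)$ with $\phi(e)=0$ and $\phi(\beta)=\phi(\beta^{-1})$ for all $\beta\in G$. For a subset $S\subseteq G$ containing $e$, $S^\infty$ denotes the set of sequences $(\alpha_1,\alpha_2,\ldots)$ with all $\alpha_n\in S$ and $\alpha_n=e$ for all but finitely many $n$. The map $\tau_G:G^\infty\to G$ is $\tau_G(\alpha_1,\alpha_2,\ldots)=\prod_{n\ge1}\alpha_n$. $\mathbb R^\infty$ denotes the set of real sequences with only finitely many nonzero entries; for $\mathbf x=(x_1,x_2,\ldots)\in\mathbb R^\infty$, $\|\mathbf x\|_t=(\sum_n|x_n|^t)^{1/t}$ for $t\in(0,\infty)$ and $\|\mathbf x\|_\infty=\max_n|x_n|$. The $t$-metric version of $\phi$ is $\phi_t(\alpha)=\inf\{\|(\phi(\alpha_1),\phi(\alpha_2),\ldots)\|_t : (\alpha_1,\alpha_2,\ldots)\in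 G^\infty,\ \tau_G(\alpha_1,\alpha_2,\ldots)=\alpha\}$. A set $S\subseteq G$ containing $e$ replaces $G$ at $t$ (for the fixed $\alpha$) if $\phi_t(\alpha)=\inf\{\|(\phi(\alpha_1),\phi(\alpha_2),\ldots)\|_t:(\alpha_1,\alpha_2,\ldots)\in S^\infty,\ \tau_G(\alpha_1,\alpha_2,\ldots)=\alpha\}$. *)

From Stdlib Require Import Reals List ClassicalEpsilon.
Open Scope R_scope.

Inductive ext_exp : Type := Fin (t : R) | Infty.

Definition valid_exp (t : ext_exp) : Prop :=
  match t with Fin t => 0 < t | Infty => True end.

Definition rpow (x t : R) : R :=
  if Rle_dec x 0 then 0 else Rpower x t.

(* ||x||_t for a finitely supported real sequence, represented by the list of
   its first entries (all later entries being 0). *)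
Definition tnorm (t : ext_exp) (l : list R) : R :=
  match t with
  | Fin t => rpow (fold_right (fun x acc => rpow (Rabs x) t + acc) 0 l) (/ t)
  | Infty => fold_right (fun x acc => Rmax (Rabs x) acc) 0 l
  end.

Record abelian_group (G : Type) (mul : G -> G -> G) (inv : G -> G) (e : G) : Prop := {
  ag_assoc : forall a b c, mul a (mul b c) = mul (mul a b) c;
  ag_comm  : forall a b, mul a b = mul b a;
  ag_idl   : forall a, mul e a = a;
  ag_invl  : forall a, mul (inv a) a = e
}.

Definition is_height {G : Type} (inv : G -> G) (e : G) (phi : G -> R) : Prop :=
  (forall b, 0 <= phi b) /\ phi e = 0 /\ (forall b, phi b = phi (inv b)).

(* tau_G on finitely supported sequences (represented as finite lists). *)
Definition tau {G : Type} (mul : G -> G -> G) (e : G) (l : list G) : G :=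
  fold_right mul e l.

Definition is_inf (E : R -> Prop) (m : R) : Prop :=
  (forall x, E x -> m <= x) /\ (forall b, (forall x, E x -> b <= x) -> b <= m).

Definition value_set {G : Type} (mul : G -> G -> G) (e : G) (phi : G -> R)
  (t : ext_exp) (S : G -> Prop) (alpha : G) : R -> Prop :=
  fun v => exists l : list G, Forall S l /\ tau mul e l = alpha /\
                             v = tnorm t (map phi l).

Definition Rinf (E : R -> Prop) : R := epsilon (inhabits 0) (fun m => is_inf E m).

Definition phi_t {G : Type} (mul : G -> G -> G) (e : G) (phi : G -> R)
  (t : ext_exp) (alpha : G) : R :=
  Rinf (value_set mul e phi t (fun _ => True) alpha).

Definition replaces {G : Type} (mul : G -> G -> G) (e : G) (phi : G -> R)
  (t : ext_exp) (alpha : G) (S : G -> Prop) : Prop :=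
  S e /\ is_inf (value_set mul e phi t S alpha) (phi_t mul e phi t alpha).

From Stdlib Require Import Reals List.
From Stdlib Require Import Lra Classical ClassicalEpsilon.
Open Scope R_scope.

(* (i) -> (ii): if the list l attains phi_t(alpha), then the finite set e :: l
   replaces G, because its value set is contained in the full value set and
   already contains the infimum.
   (ii) -> (iii): a finite set R has the finite height image phi(R).
   (iii) -> (i): the key finiteness fact is that, when the entries of r range
   over a finite set L of reals, the values ||r||_t lying below any fixed bound
   form a finite set.  For t = oo this holds because ||r||_oo is 0 or some |x|
   with x in L; for t finite, the t-th power of ||r||_t is a sum of elements of
   the finite set {|x|^t : x in L}, the nonzero ones being at least their
   minimum d > 0, so a bounded sum has a bounded number of nonzero terms.  An
   infimum of a set with only finitely many elements below one of its members
   is attained, which gives a minimising list. *)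

Definition finite_set (A : R -> Prop) : Prop :=
  exists F : list R, forall x, A x -> In x F.

Lemma Rinf_spec (V : R -> Prop) : (exists m, is_inf V m) -> is_inf V (Rinf V).
Proof. intros H. unfold Rinf. apply epsilon_spec. exact H. Qed.

Lemma inf_exists_nonneg (V : R -> Prop) :
  (exists v, V v) -> (forall v, V v -> 0 <= v) -> exists m, is_inf V m.
Proof.
  intros [v Hv] Hnn.
  destruct (completeness (fun x => V (- x))) as [M [Hub Hlub]].
  - exists 0. intros x Hx. specialize (Hnn _ Hx). lra.
  - exists (- v). rewrite Ropp_involutive. exact Hv.
  - exists (- M). split.
    + intros x Hx. assert (- x <= M) by (apply Hub; rewrite Ropp_involutive; exact Hx).
      lra.
    + intros b Hb. assert (M <= - b).
      { apply Hlub. intros y Hy. specialize (Hb _ Hy). lra. }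
      lra.
Qed.

Lemma is_inf_inhabited (V : R -> Prop) (m : R) : is_inf V m -> exists v, V v.
Proof.
  intros [_ Hgreatest]. apply NNPP. intros Hempty.
  assert (m + 1 <= m) by (apply Hgreatest; intros x Hx; exfalso; eauto).
  lra.
Qed.

Lemma is_inf_subset (V W : R -> Prop) (m : R) :
  (forall v, V v -> W v) -> is_inf W m -> V m -> is_inf V m.
Proof.
  intros HVW [Hlower _] Hm. split.
  - intros v Hv. apply Hlower, HVW, Hv.
  - intros b Hb. apply Hb, Hm.
Qed.

Lemma finite_set_has_min (F : list R) : forall V : R -> Prop,
  (forall v, V v -> In v F) -> (exists v, V v) ->
  exists v0, V v0 /\ forall v, V v -> v0 <= v.
Proof.
  induction F as [|a F IH]; intros V HF Hne.
  - destruct Hne as [v Hv]. destruct (HF v Hv).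
  - destruct (classic (exists v, V v /\ v <> a)) as [Hother | Hnone].
    + destruct (IH (fun v => V v /\ v <> a)) as [m [[Hm _] Hmin]].
      { intros v [Hv Hva]. destruct (HF v Hv) as [<- | Hin]; [congruence | exact Hin]. }
      { exact Hother. }
      destruct (classic (V a /\ a < m)) as [[Ha Ham] | Hnot].
      * exists a. split; [exact Ha|]. intros v Hv.
        destruct (Req_dec v a) as [-> | Hva]; [lra|].
        specialize (Hmin v (conj Hv Hva)). lra.
      * exists m. split; [exact Hm|]. intros v Hv.
        destruct (Req_dec v a) as [-> | Hva].
        -- apply Rnot_lt_le. intros Ham. apply Hnot. split; assumption.
        -- apply Hmin. split; assumption.
    + destruct Hne as [v Hv]. exists v. split; [exact Hv|]. intros w Hw.
      destruct (Req_dec w v) as [-> | Hwv]; [lra|].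
      exfalso. apply Hnone. exists w. split; [exact Hw|].
      intros ->. destruct (Req_dec v a) as [-> | Hva]; [congruence|].
      apply Hnone. exists v. split; assumption.
Qed.

Lemma inf_attained_of_finite_below (V : R -> Prop) (m v0 : R) :
  is_inf V m -> V v0 -> finite_set (fun v => V v /\ v <= v0) -> V m.
Proof.
  intros [Hlower Hgreatest] Hv0 [F HF].
  destruct (finite_set_has_min F (fun v => V v /\ v <= v0) HF)
    as [w [[Hw Hwv0] Hmin]].
  { exists v0. split; [exact Hv0 | lra]. }
  assert (Hwm : w <= m).
  { apply Hgreatest. intros x Hx. destruct (Rle_lt_dec x v0).
    - apply Hmin. split; assumption.
    - lra. }
  assert (Hmw : m <= w) by (apply Hlower; exact Hw).
  replace m with w by lra. exact Hw.
Qed.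

Lemma rpow_nonneg (x u : R) : 0 <= rpow x u.
Proof.
  unfold rpow. destruct (Rle_dec x 0); [lra|]. left. apply exp_pos.
Qed.

Lemma rpow_lt (a b u : R) : 0 <= a -> a < b -> 0 < u -> rpow a u < rpow b u.
Proof.
  intros Ha Hab Hu. unfold rpow.
  destruct (Rle_dec b 0); [lra|]. destruct (Rle_dec a 0).
  - apply exp_pos.
  - apply exp_increasing, Rmult_lt_compat_l; [exact Hu|].
    apply ln_increasing; lra.
Qed.

(* The t-th power of the t-norm: sum of |x|^t over the entries. *)
Definition power_sum (t : R) (r : list R) : R :=
  fold_right (fun x acc => rpow (Rabs x) t + acc) 0 r.

Definition sum_list (s : list R) : R := fold_right Rplus 0 s.

Lemma power_sum_as_sum (t : R) (r : list R) :
  power_sum t r = sum_list (map (fun x => rpow (Rabs x) t) r).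
Proof. induction r as [|x r IH]; simpl; [reflexivity | now rewrite IH]. Qed.

Lemma power_sum_nonneg (t : R) (r : list R) : 0 <= power_sum t r.
Proof.
  induction r as [|x r IH]; simpl; [lra|].
  pose proof (rpow_nonneg (Rabs x) t). lra.
Qed.

Lemma tnorm_nonneg (t : ext_exp) (r : list R) : 0 <= tnorm t r.
Proof.
  destruct t as [t|]; [apply rpow_nonneg|]. simpl.
  induction r as [|x r IH]; simpl; [lra|].
  eapply Rle_trans; [exact IH | apply Rmax_r].
Qed.

Lemma power_sum_le_of_tnorm_le (t : R) (r r0 : list R) : 0 < t ->
  tnorm (Fin t) r <= tnorm (Fin t) r0 -> power_sum t r <= power_sum t r0.
Proof.
  intros Ht Hle. apply Rnot_lt_le. intros Hlt.
  pose proof (rpow_lt (power_sum t r0) (power_sum t r) (/ t)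
                (power_sum_nonneg t r0) Hlt (Rinv_0_lt_compat t Ht)).
  simpl in Hle. fold (power_sum t r) (power_sum t r0) in Hle. lra.
Qed.

Fixpoint sums_upto (P : list R) (n : nat) : list R :=
  match n with
  | O => 0 :: nil
  | S n' => 0 :: flat_map (fun s => map (fun c => c + s) P) (sums_upto P n')
  end.

Lemma zero_in_sums_upto (P : list R) (n : nat) : In 0 (sums_upto P n).
Proof. destruct n; simpl; auto. Qed.

Lemma sum_in_sums_upto (P : list R) (d : R) : 0 < d ->
  (forall c, In c P -> 0 <= c) -> (forall c, In c P -> 0 < c -> d <= c) ->
  forall s, Forall (fun c => In c P) s ->
  forall n, sum_list s < INR n * d -> In (sum_list s) (sums_upto P n).
Proof.
  intros Hd Hnn Hdc s. induction s as [|c s IH]; intros Hs n Hlt.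
  - apply zero_in_sums_upto.
  - inversion Hs as [|? ? Hc Hs']; subst. simpl in Hlt |- *.
    assert (Hs0 : 0 <= sum_list s).
    { clear -Hs' Hnn. induction Hs' as [|c' s' Hc' _ IHs']; simpl; [lra|].
      pose proof (Hnn c' Hc'). lra. }
    pose proof (Hnn c Hc) as Hc0.
    destruct (Req_dec c 0) as [-> | Hcpos].
    + rewrite Rplus_0_l. apply IH; [exact Hs' | lra].
    + pose proof (Hdc c Hc ltac:(lra)). destruct n as [|n].
      * simpl in Hlt. lra.
      * rewrite S_INR in Hlt. simpl. right. apply in_flat_map.
        exists (sum_list s). split.
        -- apply IH; [exact Hs' | lra].
        -- apply (in_map (fun c => c + sum_list s)), Hc.
Qed.

(* The least positive element of a finite set (or 1 if there is none). *)
Lemma positive_lower_bound (P : list R) :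
  exists d, 0 < d /\ forall c, In c P -> 0 < c -> d <= c.
Proof.
  induction P as [|a P [d [Hd Hdc]]].
  - exists 1. split; [lra | intros c []].
  - destruct (Rlt_le_dec 0 a).
    + exists (Rmin d a). split; [apply Rmin_case; lra|].
      intros c [<- | Hin] Hc; [apply Rmin_r|].
      eapply Rle_trans; [apply Rmin_l | exact (Hdc c Hin Hc)].
    + exists d. split; [exact Hd|]. intros c [<- | Hin] Hc; [lra | exact (Hdc c Hin Hc)].
Qed.

Lemma bounded_sums_finite (P : list R) (M : R) : (forall c, In c P -> 0 <= c) ->
  finite_set (fun v => exists s, Forall (fun c => In c P) s /\
                                 v = sum_list s /\ v <= M).
Proof.
  intros Hnn. destruct (positive_lower_bound P) as [d [Hd Hdc]].
  destruct (INR_unbounded (M / d)) as [n Hn].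
  exists (sums_upto P n). intros v [s [Hs [-> HM]]].
  apply (sum_in_sums_upto P d); auto.
  apply Rle_lt_trans with M; [exact HM|].
  apply Rmult_lt_reg_r with (/ d); [apply Rinv_0_lt_compat, Hd|].
  rewrite Rmult_assoc, Rinv_r; lra.
Qed.

Lemma tnorm_infty_values (L r : list R) : Forall (fun x => In x L) r ->
  In (tnorm Infty r) (0 :: map Rabs L).
Proof.
  induction r as [|x r IH]; simpl; intros Hr; [left; reflexivity|].
  inversion Hr; subst. unfold Rmax. destruct Rle_dec.
  - apply IH. assumption.
  - right. apply in_map. assumption.
Qed.

Lemma tnorm_values_below_finite (t : ext_exp) (L r0 : list R) : valid_exp t ->
  finite_set (fun v => exists r, Forall (fun x => In x L) r /\
                                 v = tnorm t r /\ v <= tnorm t r0).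
Proof.
  destruct t as [t|]; intros Ht.
  - set (P := map (fun x => rpow (Rabs x) t) L).
    assert (HP : forall c, In c P -> 0 <= c).
    { intros c Hc. apply in_map_iff in Hc as [x [<- _]]. apply rpow_nonneg. }
    destruct (bounded_sums_finite P (power_sum t r0) HP) as [F HF].
    exists (map (fun s => rpow s (/ t)) F). intros v [r [Hr [-> Hle]]].
    change (In (rpow (power_sum t r) (/ t)) (map (fun s => rpow s (/ t)) F)).
    apply (in_map (fun s => rpow s (/ t))), HF.
    exists (map (fun x => rpow (Rabs x) t) r). repeat split.
    + apply Forall_map. eapply Forall_impl; [|exact Hr].
      intros x Hx. exact (in_map (fun y => rpow (Rabs y) t) L x Hx).
    + apply power_sum_as_sum.
    + apply power_sum_le_of_tnorm_le; assumption.
  - exists (0 :: map Rabs L). intros v [r [Hr [-> _]]]. apply tnorm_infty_values, Hr.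
Qed.

Section TMetric.

Variables (G : Type) (mul : G -> G -> G) (inv : G -> G) (e : G).
Hypothesis HG : abelian_group G mul inv e.
Variables (phi : G -> R) (alpha : G) (t : ext_exp).
Hypothesis Ht : valid_exp t.

Let values (S : G -> Prop) : R -> Prop := value_set mul e phi t S alpha.
Let phi_t_alpha : R := phi_t mul e phi t alpha.

(* phi_t(alpha) is the infimum of all the t-norms of factorisations of alpha;
   the one-term factorisation (alpha) shows the value set is nonempty. *)
Lemma phi_t_is_inf : is_inf (values (fun _ => True)) phi_t_alpha.
Proof.
  apply Rinf_spec, inf_exists_nonneg.
  - exists (tnorm t (map phi (alpha :: nil))), (alpha :: nil).
    split; [constructor; auto|]. split; [|reflexivity].
    unfold tau. simpl. rewrite (ag_comm _ _ _ _ HG). apply (ag_idl _ _ _ _ HG).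
  - intros v [l [_ [_ ->]]]. apply tnorm_nonneg.
Qed.

Lemma attained_finite_replaces (l : list G) :
  tau mul e l = alpha -> phi_t_alpha = tnorm t (map phi l) ->
  replaces mul e phi t alpha (fun x => In x (e :: l)).
Proof.
  intros Htau Heq. split; [left; reflexivity|].
  apply (is_inf_subset _ (values (fun _ => True))).
  - intros v [l' [_ [Htau' ->]]]. exists l'. split; [apply Forall_forall; auto | auto].
  - exact phi_t_is_inf.
  - exists l. split; [|auto]. apply Forall_forall. intros x Hx. right. exact Hx.
Qed.

Lemma finite_heights_attained (S : G -> Prop) (L : list R) :
  (forall x, S x -> In (phi x) L) -> replaces mul e phi t alpha S ->
  exists l, tau mul e l = alpha /\ phi_t_alpha = tnorm t (map phi l).
Proof.
  intros HL [_ Hinf].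
  assert (Hphi_in_L : forall l, Forall S l -> Forall (fun x => In x L) (map phi l)).
  { intros l Hl. apply Forall_map. eapply Forall_impl; [exact HL | exact Hl]. }
  destruct (is_inf_inhabited _ _ Hinf) as [v0 Hv0].
  destruct (inf_attained_of_finite_below (values S) phi_t_alpha v0 Hinf Hv0)
    as [l [_ [Htau Heq]]].
  - destruct Hv0 as [l0 [_ [_ ->]]].
    destruct (tnorm_values_below_finite t L (map phi l0) Ht) as [F HF].
    exists F. intros v [[l [Hl [_ ->]]] Hle]. apply HF.
    exists (map phi l). repeat split; [apply Hphi_in_L, Hl | congruence].
  - exists l. split; assumption.
Qed.

End TMetric.

Theorem theorem2p1 (G : Type) (mul : G -> G -> G) (inv : G -> G) (e : G)
  (HG : abelian_group G mul inv e) (phi : G -> R) (Hphi : is_height inv e phi)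
  (alpha : G) (t : ext_exp) (Ht : valid_exp t) :
  ( (exists l : list G, tau mul e l = alpha /\
        phi_t mul e phi t alpha = tnorm t (map phi l))
    <-> (exists R0 : list G, In e R0 /\
           replaces mul e phi t alpha (fun x => In x R0)) )
  /\
  ( (exists R0 : list G, In e R0 /\
        replaces mul e phi t alpha (fun x => In x R0))
    <-> (exists S : G -> Prop, S e /\
           (exists L : list R, forall x, S x -> In (phi x) L) /\
           replaces mul e phi t alpha S) ).
Proof.
  assert (i_ii : (exists l, tau mul e l = alpha /\
                   phi_t mul e phi t alpha = tnorm t (map phi l)) ->
                 exists R0, In e R0 /\ replaces mul e phi t alpha (fun x => In x R0)).
  { intros [l [Htau Heq]]. exists (e :: l). split; [left; reflexivity|].
    exact (attained_finite_replaces G mul inv e HG phi alpha t l Htau Heq). }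
  assert (ii_iii : (exists R0, In e R0 /\ replaces mul e phi t alpha (fun x => In x R0)) ->
                   exists S, S e /\ (exists L, forall x, S x -> In (phi x) L) /\
                             replaces mul e phi t alpha S).
  { intros [R0 [He Hrep]]. exists (fun x => In x R0).
    split; [exact He|]. split; [|exact Hrep].
    exists (map phi R0). intros x Hx. apply in_map, Hx. }
  assert (iii_i : (exists S, S e /\ (exists L, forall x, S x -> In (phi x) L) /\
                             replaces mul e phi t alpha S) ->
                  exists l, tau mul e l = alpha /\
                            phi_t mul e phi t alpha = tnorm t (map phi l)).
  { intros [S [_ [[L HL] Hrep]]]. exact (finite_heights_attained G mul e phi alpha t Ht S L HL Hrep). }
  split; split; intros H; auto.
Qed.
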